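(* Let $\mathcal{A}$ be a class of monomorphisms of simplicial sets that is saturated (contains isomorphisms and is closed under composition, transfinite composition, cobase change and retracts) and has the right cancellation property: for monomorphisms $u:A\to B$, $v:B\to C$, if $vu\in\mathcal{A}$ and $u\in\mathcal{A}$ then $v\in\mathcal{A}$. If the inclusion $I_n\subseteq\Delta[n]$ belongs to $\mathcal{A}$ for every $n\ge2$, then every mid anodyne map belongs to $\mathcal{A}$.
   Context: $I_n\subseteq\Delta[n]$ denotes the $n$-chain, the union of the edges $(i,i+1)$ for $0\le i\le n-1$. A mid anodyne map is a map in the saturated class generated by the inner horn inclusions $\Lambda^k[n]\subset\Delta[n]$, $0<k<n$. *)

From mathcomp Require Import all_boot.
Set Implicit Arguments. Unset Strict Implicit. Unset Printing Implicit Defensive.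

(* A map [m] -> [n] is a monotone map 'I_m.+1 -> 'I_n.+1. *)
Definition monob m n (f : {ffun 'I_m.+1 -> 'I_n.+1}) : bool :=
  [forall i : 'I_m.+1, forall j : 'I_m.+1, (i <= j) ==> (f i <= f j)].

Definition Dmap (m n : nat) := {f : {ffun 'I_m.+1 -> 'I_n.+1} | monob f}.

Lemma monob_id n : monob [ffun i : 'I_n.+1 => i].
Proof. by apply/forallP=> i; apply/forallP=> j; rewrite !ffunE; apply/implyP. Qed.

Definition did n : Dmap n n := exist (@monob n n) _ (monob_id n).

Lemma monob_comp m n p (g : Dmap n p) (f : Dmap m n) :
  monob [ffun i => sval g (sval f i)].
Proof.
apply/forallP=> i; apply/forallP=> j; apply/implyP=> lij; rewrite !ffunE.
have /forallP/(_ i)/forallP/(_ j)/implyP/(_ lij) := svalP f.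
by move=> H; have /forallP/(_ (sval f i))/forallP/(_ (sval f j))/implyP/(_ H) := svalP g.
Qed.

Definition dcomp m n p (g : Dmap n p) (f : Dmap m n) : Dmap m p :=
  exist (@monob m p) _ (monob_comp g f).

Lemma dcomp_idl m n (f : Dmap m n) : dcomp (did n) f = f.
Proof. by apply: val_inj; apply/ffunP=> i; rewrite /= !ffunE. Qed.
Lemma dcomp_idr m n (f : Dmap m n) : dcomp f (did m) = f.
Proof. by apply: val_inj; apply/ffunP=> i; rewrite /= !ffunE. Qed.
Lemma dcompA m n p q (h : Dmap p q) (g : Dmap n p) (f : Dmap m n) :
  dcomp h (dcomp g f) = dcomp (dcomp h g) f.
Proof. by apply: val_inj; apply/ffunP=> i; rewrite /= !ffunE. Qed.

Record sSet := SSet {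
  sx :> nat -> Type;
  sact : forall m n, Dmap m n -> sx n -> sx m;
  sact_id : forall n (x : sx n), sact (did n) x = x;
  sact_comp : forall m n p (f : Dmap m n) (g : Dmap n p) (x : sx p),
      sact (dcomp g f) x = sact f (sact g x) }.
Arguments sact {s m n}.

Record smap (X Y : sSet) := SMap {
  sfun :> forall n : nat, X n -> Y n;
  snat : forall m n (f : Dmap m n) (x : X n), sfun (sact f x) = sact f (sfun x) }.
Arguments sfun {X Y} s n _.

Lemma scomp_nat (X Y Z : sSet) (g : smap Y Z) (f : smap X Y) m n (h : Dmap m n) (x : X n) :
  g m (f m (sact h x)) = sact h (g n (f n x)).
Proof. by rewrite !snat. Qed.

Definition scomp (X Y Z : sSet) (g : smap Y Z) (f : smap X Y) : smap X Z :=
  @SMap X Z (fun n (x : X n) => g n (f n x)) (scomp_nat g f).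

Lemma sid_nat (X : sSet) m n (h : Dmap m n) (x : X n) : sact h x = sact h x.
Proof. by []. Qed.
Definition sid (X : sSet) : smap X X := @SMap X X (fun n (x : X n) => x) (@sid_nat X).

Definition seq (X Y : sSet) (f g : smap X Y) : Prop := forall n (x : X n), f n x = g n x.

Definition mono (X Y : sSet) (f : smap X Y) : Prop := forall n, injective (f n).

Lemma Dsimp_id n m (x : Dmap m n) : dcomp x (did m) = x.
Proof. exact: dcomp_idr. Qed.
Lemma Dsimp_comp n m p q (f : Dmap m p) (g : Dmap p q) (x : Dmap q n) :
  dcomp x (dcomp g f) = dcomp (dcomp x g) f.
Proof. exact: dcompA. Qed.

Definition Dsimp (n : nat) : sSet :=
  @SSet (fun m => Dmap m n) (fun m p f x => dcomp x f) (@Dsimp_id n) (@Dsimp_comp n).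

Definition sub_closed (X : sSet) (P : forall n, X n -> bool) : Prop :=
  forall m n (f : Dmap m n) (x : X n), P n x -> P m (sact f x).

Section Sub.
Local Unset Implicit Arguments.
Variables (X : sSet) (P : forall n, X n -> bool) (HP : sub_closed P).
Definition subsx n := {x : X n | P n x}.
Definition subact m n (f : Dmap m n) (x : subsx n) : subsx m :=
  exist _ (sact f (sval x)) (HP _ _ f _ (svalP x)).
Arguments subact {m n}.
Lemma subact_id n (x : subsx n) : subact (did n) x = x.
Proof.
case: x => x px; rewrite /subact /=.
move: (HP _ _ _ _ _); rewrite sact_id => q; by rewrite (bool_irrelevance q px).
Qed.
Lemma subact_comp m n p (f : Dmap m n) (g : Dmap n p) (x : subsx p) :
  subact (dcomp g f) x = subact f (subact g x).
Proof.
case: x => x px; rewrite /subact /=.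
move: (HP _ _ _ _ _) (HP _ _ _ _ _); rewrite sact_comp => q1 q2; by rewrite (bool_irrelevance q1 q2).
Qed.
Definition subsset : sSet := SSet subact_id subact_comp.
Lemma sincl_nat m n (f : Dmap m n) (x : subsset n) :
  sval (sact f x) = sact f (sval x).
Proof. by []. Qed.
Definition sincl : smap subsset X := @SMap subsset X (fun n (x : subsset n) => sval x) sincl_nat.
End Sub.
Arguments subsset {X P}.
Arguments sincl {X P}.

(* Horn Lambda^k[n] : simplices of Delta[n] missing some vertex j <> k *)
Definition hornP n (k : 'I_n.+1) m (f : Dmap m n) : bool :=
  [exists j : 'I_n.+1, (j != k) && [forall i, sval f i != j]].

Lemma horn_closed n (k : 'I_n.+1) : sub_closed (X := Dsimp n) (@hornP n k).
Proof.
move=> m p f x /existsP [j /andP [jk /forallP H]].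
apply/existsP; exists j; rewrite jk /=; apply/forallP=> i; rewrite ffunE; exact: H.
Qed.

Arguments horn_closed : clear implicits.
Definition horn n (k : 'I_n.+1) : sSet := subsset (horn_closed n k).
Definition horn_incl n (k : 'I_n.+1) : smap (horn k) (Dsimp n) := sincl (horn_closed n k).

(* The n-chain I_n : union of the edges (i, i+1), 0 <= i <= n-1: simplices of
   Delta[n] whose image lies in {i, i+1} for some i < n *)
Definition chainP n m (f : Dmap m n) : bool :=
  [exists i : 'I_n, [forall t, (nat_of_ord (sval f t) == i) || (nat_of_ord (sval f t) == i.+1)]].

Lemma chain_closed n : sub_closed (X := Dsimp n) (@chainP n).
Proof.
move=> m p f x /existsP [i /forallP H].
apply/existsP; exists i; apply/forallP=> t; rewrite ffunE; exact: H.
Qed.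

Arguments chain_closed : clear implicits.
Definition chain n : sSet := subsset (chain_closed n).
Definition chain_incl n : smap (chain n) (Dsimp n) := sincl (chain_closed n).

Definition sclass := forall X Y : sSet, smap X Y -> Prop.

Definition is_iso (X Y : sSet) (f : smap X Y) : Prop :=
  exists g : smap Y X, seq (scomp g f) (sid X) /\ seq (scomp f g) (sid Y).

Definition contains_isos (C : sclass) : Prop :=
  forall X Y (f : smap X Y), is_iso f -> C X Y f.

Definition comp_closed (C : sclass) : Prop :=
  forall X Y Z (f : smap X Y) (g : smap Y Z), C X Y f -> C Y Z g -> C X Z (scomp g f).

Definition is_pushout (A B C' D : sSet) (i : smap A B) (g : smap A C')
    (j : smap C' D) (k : smap B D) : Prop :=
  seq (scomp k i) (scomp j g) /\
  forall (E : sSet) (b : smap B E) (c : smap C' E), seq (scomp b i) (scomp c g) ->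
    (exists d : smap D E, seq (scomp d k) b /\ seq (scomp d j) c) /\
    (forall d d' : smap D E, seq (scomp d k) b -> seq (scomp d j) c ->
        seq (scomp d' k) b -> seq (scomp d' j) c -> seq d d').

Definition cobase_closed (C : sclass) : Prop :=
  forall A B C' D (i : smap A B) (g : smap A C') (j : smap C' D) (k : smap B D),
    is_pushout i g j k -> C A B i -> C C' D j.

Definition is_retract (A B X Y : sSet) (f : smap A B) (g : smap X Y) : Prop :=
  exists (s : smap A X) (r : smap X A) (s' : smap B Y) (r' : smap Y B),
    [/\ seq (scomp r s) (sid A), seq (scomp r' s') (sid B),
        seq (scomp g s) (scomp s' f) & seq (scomp f r) (scomp r' g)].

Definition retract_closed (C : sclass) : Prop :=
  forall A B X Y (f : smap A B) (g : smap X Y), is_retract f g -> C X Y g -> C A B f.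

Definition well_order (I : Type) (lt : I -> I -> Prop) : Prop :=
  [/\ forall i, ~ lt i i,
      forall i j k, lt i j -> lt j k -> lt i k,
      forall i j, [\/ lt i j, i = j | lt j i]
    & well_founded lt].

Definition is_colim (I : Type) (lt : I -> I -> Prop) (X : I -> sSet)
    (xm : forall i j, lt i j -> smap (X i) (X j)) (Y : sSet) (c : forall i, smap (X i) Y) : Prop :=
  (forall i j (h : lt i j), seq (scomp (c j) (xm i j h)) (c i)) /\
  forall (E : sSet) (e : forall i, smap (X i) E),
    (forall i j (h : lt i j), seq (scomp (e j) (xm i j h)) (e i)) ->
    (exists d : smap Y E, forall i, seq (scomp d (c i)) (e i)) /\
    (forall d d' : smap Y E, (forall i, seq (scomp d (c i)) (e i)) ->
        (forall i, seq (scomp d' (c i)) (e i)) -> seq d d').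

Definition is_colim_below (I : Type) (lt : I -> I -> Prop) (X : I -> sSet)
    (xm : forall i j, lt i j -> smap (X i) (X j)) (j : I) : Prop :=
  forall (E : sSet) (e : forall i, lt i j -> smap (X i) E),
    (forall i k (h1 : lt i k) (h2 : lt k j) (h3 : lt i j),
        seq (scomp (e k h2) (xm i k h1)) (e i h3)) ->
    (exists d : smap (X j) E, forall i (h : lt i j), seq (scomp d (xm i j h)) (e i h)) /\
    (forall d d' : smap (X j) E,
        (forall i (h : lt i j), seq (scomp d (xm i j h)) (e i h)) ->
        (forall i (h : lt i j), seq (scomp d' (xm i j h)) (e i h)) -> seq d d').

Definition transfinite_closed (C : sclass) : Prop :=
  forall (I : Type) (lt : I -> I -> Prop) (bot : I) (X : I -> sSet)
    (xm : forall i j, lt i j -> smap (X i) (X j)) (Y : sSet) (c : forall i, smap (X i) Y),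
    well_order lt ->
    (forall i, ~ lt i bot) ->
    (forall i j k (h1 : lt i j) (h2 : lt j k) (h3 : lt i k),
        seq (scomp (xm j k h2) (xm i j h1)) (xm i k h3)) ->
    (forall j, j <> bot -> (forall i, lt i j -> exists k, lt i k /\ lt k j) ->
        @is_colim_below I lt X xm j) ->
    (forall i j (h : lt i j), (forall k, ~ (lt i k /\ lt k j)) -> C _ _ (xm i j h)) ->
    @is_colim I lt X xm Y c ->
    C _ _ (c bot).

Definition saturated (C : sclass) : Prop :=
  [/\ contains_isos C, comp_closed C, transfinite_closed C, cobase_closed C
    & retract_closed C].

Definition right_cancel (C : sclass) : Prop :=
  forall A B D (u : smap A B) (v : smap B D),
    mono u -> mono v -> C A D (scomp v u) -> C A B u -> C B D v.

Definition mid_anodyne (X Y : sSet) (f : smap X Y) : Prop :=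
  forall C : sclass, saturated C ->
    (forall n (k : 'I_n.+1), 0 < k < n -> C _ _ (horn_incl k)) -> C X Y f.

From Pilot Require Import Defs.
From mathcomp Require Import all_boot zify.
Set Implicit Arguments. Unset Strict Implicit. Unset Printing Implicit Defensive.

(* For T a set of vertices of [n], let X_T ⊆ Δ[n] be the union of the chain I_n with the faces
   ∂_t Δ[n], t ∈ T; for 0 < k < n the horn Λ^k[n] is X_T with T = [n] \ {k}.
   Adding a face ∂_i to X_T is a cobase change of X_T ∩ ∂_i → ∂_i, and the coface Δ[n-1] ≅ ∂_i
   identifies this map with X_T' → Δ[n-1], T' the preimage of T, as soon as the edge {i-1, i+1}
   of ∂_i already lies in X_T.  By right cancellation against I_(n-1) → Δ[n-1], that map is in A
   whenever I_(n-1) → X_T' is.  Adding the faces in the order 0, n, 1, ..., a-1, n-1, ..., b+1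
   keeps every T' empty, {0}, or of the form {t < a} ∪ {t > b} one dimension lower, so induction
   on n puts I_n → Λ^k[n] in A; right cancellation against I_n → Δ[n] finishes. *)

Record ssub (X : sSet) := SSub { smem :> forall n, X n -> bool; smem_closed : sub_closed smem }.
Arguments smem_closed {X} s [m n] f [x].

Definition sset_of X (S : ssub X) : sSet := subsset (smem_closed S).

Definition sle X (S S' : ssub X) : Prop := forall n (x : X n), S n x -> S' n x.

Section Restriction.
Variables (X Y : sSet) (S : ssub X) (R : ssub Y) (f : smap X Y).
Hypothesis fSR : forall n (x : X n), S n x -> R n (f n x).

Definition srestr_fun n (x : sset_of S n) : sset_of R n := exist _ (f n (sval x)) (fSR (svalP x)).

Lemma srestr_nat m n (g : Dmap m n) (x : sset_of S n) :
  srestr_fun (sact g x) = sact g (srestr_fun x).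
Proof. by apply: val_inj; rewrite /= snat. Qed.

Definition srestr : smap (sset_of S) (sset_of R) := SMap srestr_nat.
End Restriction.

Definition sub_incl X (S S' : ssub X) (H : sle S S') : smap (sset_of S) (sset_of S') :=
  srestr (f := sid X) H.

Lemma sub_incl_mono X (S S' : ssub X) (H : sle S S') : mono (sub_incl H).
Proof. by move=> n x y e; apply: val_inj; exact: (congr1 val e). Qed.

Arguments sub_incl_mono {X S S'} H.

Definition ssubT X : ssub X := @SSub X (fun _ _ => true) (fun _ _ _ _ _ => isT).

Definition ssubI X (U V : ssub X) : ssub X.
Proof.
apply: (@SSub X (fun n x => U n x && V n x)).
by move=> m n f x /andP [a b]; apply/andP; split; exact: smem_closed.
Defined.

Definition ssubU X (U V : ssub X) : ssub X.
Proof.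
apply: (@SSub X (fun n x => U n x || V n x)).
by move=> m n f x /orP [a|b]; apply/orP; [left|right]; exact: smem_closed.
Defined.

Lemma in_ssubI X (U V : ssub X) n (x : X n) : ssubI U V n x = U n x && V n x.
Proof. by []. Qed.

Lemma sleIl X (U V : ssub X) : sle (ssubI U V) U. Proof. by move=> n x /andP []. Qed.
Lemma sleIr X (U V : ssub X) : sle (ssubI U V) V. Proof. by move=> n x /andP []. Qed.
Lemma sleUl X (U V : ssub X) : sle U (ssubU U V). Proof. by move=> n x /= ->. Qed.
Lemma sleUr X (U V : ssub X) : sle V (ssubU U V). Proof. by move=> n x /= ->; rewrite orbT. Qed.
Lemma sleT X (S : ssub X) : sle S (ssubT X). Proof. by []. Qed.
Arguments sleIl {X} U V.
Arguments sleIr {X} U V.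
Arguments sleUl {X} U V.
Arguments sleUr {X} U V.
Arguments sleT {X} S.

Lemma ssubU_notl X (U V : ssub X) n (x : X n) : ssubU U V n x -> U n x = false -> V n x.
Proof. by move=> /= + hu; rewrite hu. Qed.

Section UnionGlue.
Variables (X E : sSet) (U V : ssub X) (b : smap (sset_of V) E) (c : smap (sset_of U) E).
Definition ssubU_glue_fun n (x : sset_of (ssubU U V) n) : E n :=
  match sumbool_of_bool (U n (sval x)) with
  | left hu => c n (exist _ (sval x) hu)
  | right hu => b n (exist _ (sval x) (ssubU_notl (svalP x) hu))
  end.

Lemma ssubU_glue_funU n (x : sset_of (ssubU U V) n) (hu : U n (sval x)) :
  ssubU_glue_fun x = c n (exist _ (sval x) hu).
Proof.
rewrite /ssubU_glue_fun; case: sumbool_of_bool => [h|h]; last by have := hu; rewrite h.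
by congr (c n _); apply: val_inj.
Qed.

Hypothesis bc_agree : forall n (x : X n) (hu : U n x) (hv : V n x),
  b n (exist _ x hv) = c n (exist _ x hu).

Lemma ssubU_glue_funV n (x : sset_of (ssubU U V) n) (hv : V n (sval x)) :
  ssubU_glue_fun x = b n (exist _ (sval x) hv).
Proof.
rewrite /ssubU_glue_fun; case: sumbool_of_bool => [h|h]; first by rewrite bc_agree.
by congr (b n _); apply: val_inj.
Qed.

Lemma ssubU_glue_nat m n (f : Dmap m n) (x : sset_of (ssubU U V) n) :
  ssubU_glue_fun (sact f x) = sact f (ssubU_glue_fun x).
Proof.
case: (boolP (U n (sval x))) => [hu|/negbTE hu].
  rewrite (ssubU_glue_funU hu) -snat (ssubU_glue_funU (x := sact f x) (smem_closed U f hu)).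
  by congr (c m _); apply: val_inj.
have hv := ssubU_notl (svalP x) hu.
rewrite (ssubU_glue_funV hv) -snat (ssubU_glue_funV (x := sact f x) (smem_closed V f hv)).
by congr (b m _); apply: val_inj.
Qed.

Definition ssubU_glue : smap (sset_of (ssubU U V)) E := SMap ssubU_glue_nat.
End UnionGlue.

Lemma ssubU_pushout X (U V : ssub X) (h1 : sle (ssubI U V) V) (h2 : sle (ssubI U V) U)
    (h3 : sle U (ssubU U V)) (h4 : sle V (ssubU U V)) :
  is_pushout (sub_incl h1) (sub_incl h2) (sub_incl h3) (sub_incl h4).
Proof.
split=> [n x|E b c bc]; first exact: val_inj.
have agree n (x : X n) (hu : U n x) (hv : V n x) : b n (exist _ x hv) = c n (exist _ x hu).
  have := bc n (exist _ x (introT andP (conj hu hv))).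
  by rewrite /=; congr (b n _ = c n _); apply: val_inj.
split.
  exists (ssubU_glue agree); split=> n x /=.
    rewrite (ssubU_glue_funV agree (x := sub_incl h4 n x) (svalP x)).
    by congr (b n _); apply: val_inj.
  by rewrite (ssubU_glue_funU b c (x := sub_incl h3 n x) (svalP x)); congr (c n _); apply: val_inj.
move=> d d' db dc d'b d'c n x.
case: (boolP (U n (sval x))) => [hu|/negbTE hu].
  have -> : x = sub_incl h3 n (exist _ (sval x) hu) by apply: val_inj.
  exact: etrans (dc n _) (esym (d'c n _)).
have -> : x = sub_incl h4 n (exist _ (sval x) (ssubU_notl (svalP x) hu)) by apply: val_inj.
exact: etrans (db n _) (esym (d'b n _)).
Qed.

Lemma sub_incl_retract X Y (S S' : ssub X) (R R' : ssub Y) (HS : sle S S') (HR : sle R R')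
    (d : smap Y X) (s : smap X Y)
    (dR : forall n y, R n y -> S n (d n y)) (dR' : forall n y, R' n y -> S' n (d n y))
    (sS : forall n x, S n x -> R n (s n x)) (sS' : forall n x, S' n x -> R' n (s n x)) :
  (forall n x, S' n x -> d n (s n x) = x) -> is_retract (sub_incl HS) (sub_incl HR).
Proof.
move=> ds; exists (srestr sS), (srestr dR), (srestr sS'), (srestr dR').
split=> n x; apply: val_inj => //=; [exact: ds (HS _ _ (svalP x)) | exact: ds (svalP x)].
Qed.

Lemma sub_incl_ext_retract X (S1 S2 S1' S2' : ssub X) (H : sle S1 S2) (H' : sle S1' S2') :
  (forall n x, S1 n x = S1' n x) -> (forall n x, S2 n x = S2' n x) ->
  is_retract (sub_incl H') (sub_incl H).
Proof.
move=> e1 e2.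
by apply: (@sub_incl_retract _ _ _ _ _ _ H' H (sid X) (sid X)) => n x //=; rewrite ?e1 ?e2.
Qed.

Lemma sincl_sleT_retract X (S : ssub X) :
  is_retract (sincl (smem_closed S)) (sub_incl (sleT S)) /\
  is_retract (sub_incl (sleT S)) (sincl (smem_closed S)).
Proof.
pose sf n (x : X n) : sset_of (ssubT X) n := exist _ x isT.
have sf_nat m n (f : Dmap m n) (x : X n) : sf m (sact f x) = sact f (sf n x) by apply: val_inj.
split.
  exists (sid _), (sid _), (SMap sf_nat), (sincl (smem_closed (ssubT X))).
  by split=> n x //; apply: val_inj.
exists (sid _), (sid _), (sincl (smem_closed (ssubT X))), (SMap sf_nat).
by split=> n x //; apply: val_inj.
Qed.

Section SaturatedClass.
Variable A : sclass.
Hypothesis A_sat : saturated A.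
Hypothesis A_cancel : right_cancel A.

Lemma A_retract X Y X' Y' (f : smap X Y) (g : smap X' Y') : is_retract f g -> A g -> A f.
Proof. by case: A_sat => _ _ _ _; apply. Qed.

Lemma A_ext X Y (f g : smap X Y) : Defs.seq f g -> A f -> A g.
Proof.
move=> fg; apply: A_retract; exists (sid X), (sid X), (sid Y), (sid Y).
by split=> n x //=; rewrite fg.
Qed.

Lemma A_sub_incl_ext X (S1 S2 S1' S2' : ssub X) (H : sle S1 S2) (H' : sle S1' S2') :
  (forall n x, S1 n x = S1' n x) -> (forall n x, S2 n x = S2' n x) ->
  A (sub_incl H) -> A (sub_incl H').
Proof. by move=> e1 e2; apply/A_retract/sub_incl_ext_retract. Qed.

Lemma A_sub_incl_eq X (S S' : ssub X) (H : sle S S') : sle S' S -> A (sub_incl H).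
Proof.
case: A_sat => A_iso _ _ _ _ H' ; apply: A_iso; exists (sub_incl H').
by split=> n x; apply: val_inj.
Qed.

Lemma A_sub_incl_comp X (S1 S2 S3 : ssub X)
    (H12 : sle S1 S2) (H23 : sle S2 S3) (H13 : sle S1 S3) :
  A (sub_incl H12) -> A (sub_incl H23) -> A (sub_incl H13).
Proof.
case: A_sat => _ A_comp _ _ _ A12 A23.
by apply: A_ext (A_comp _ _ _ _ _ A12 A23) => n x; apply: val_inj.
Qed.

Lemma A_sub_incl_cancel X (S1 S2 S3 : ssub X)
    (H12 : sle S1 S2) (H23 : sle S2 S3) (H13 : sle S1 S3) :
  A (sub_incl H13) -> A (sub_incl H12) -> A (sub_incl H23).
Proof.
move=> A13 A12.
apply: (A_cancel (sub_incl_mono H12) (sub_incl_mono H23) _ A12).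
by apply: A_ext A13 => n x; apply: val_inj.
Qed.

Lemma A_ssubU X (U V : ssub X) : A (sub_incl (sleIr U V)) -> A (sub_incl (sleUl U V)).
Proof.
case: A_sat => _ _ _ A_cobase _; apply: A_cobase.
exact: ssubU_pushout (sleIr U V) (sleIl U V) (sleUl U V) (sleUr U V).
Qed.

Lemma A_sincl_sleT X (S : ssub X) :
  A (sincl (smem_closed S)) <-> A (sub_incl (sleT S)).
Proof. by case: (sincl_sleT_retract S) => r1 r2; split; apply: A_retract. Qed.

End SaturatedClass.

Lemma dmap_mono m n (x : Dmap m n) (j1 j2 : 'I_m.+1) : j1 <= j2 -> sval x j1 <= sval x j2.
Proof. exact: implyP (forallP (forallP (svalP x) j1) j2). Qed.

Lemma dmap_between m n (x : Dmap m n) (j : 'I_m.+1) : sval x ord0 <= sval x j <= sval x ord_max.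
Proof. by rewrite !dmap_mono ?leq_ord. Qed.

Lemma chainP_span m n (x : Dmap m n) : 0 < n ->
  chainP x = (sval x ord_max <= (sval x ord0).+1).
Proof.
move=> n_gt0; apply/idP/idP => [/existsP [e /forallP on_e]|span].
  by move: (on_e ord0) (on_e ord_max) => /orP [] /eqP + /orP [] /eqP; lia.
have lt_e : minn (sval x ord0) n.-1 < n by lia.
apply/existsP; exists (Ordinal lt_e); apply/forallP => j /=.
by have := dmap_between x j; have := ltn_ord (sval x j); lia.
Qed.

Lemma chainP_Dsimp1 p (x : Dmap p 1) : chainP x.
Proof. by rewrite chainP_span //; have := ltn_ord (sval x ord_max); lia. Qed.

Lemma dcompE m n (g : Dmap m n) p (x : Dmap p m) j : sval (dcomp g x) j = sval g (sval x j).
Proof. by rewrite /= ffunE. Qed.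

Lemma coface_monob m (i : 'I_m.+2) : monob [ffun j : 'I_m.+1 => lift i j].
Proof. by apply/forallP => j1; apply/forallP => j2; apply/implyP; rewrite !ffunE /= leq_bump2. Qed.

Definition coface m (i : 'I_m.+2) : Dmap m m.+1 := exist (@monob m m.+1) _ (coface_monob i).

(* The codegeneracy [m+1] -> [m] that is a retraction of [coface i]; the [minn _ m] only
   matters for [t = i = m+1]. *)
Lemma coface_retract_monob m (i : 'I_m.+2) :
  monob [ffun t : 'I_m.+2 => inord (minn (unbump i t) m) : 'I_m.+1].
Proof.
apply/forallP => t1; apply/forallP => t2; apply/implyP => le_t; rewrite !ffunE.
by rewrite !inordK ?ltnS ?geq_minr // /unbump; case: (ltnP i t1); case: (ltnP i t2); lia.
Qed.

Definition coface_retract m (i : 'I_m.+2) : Dmap m.+1 m :=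
  exist (@monob m.+1 m) _ (coface_retract_monob i).

Definition avoids m n (x : Dmap m n) (t : 'I_n.+1) : bool := [forall j, sval x j != t].

Lemma avoids_coface m (i : 'I_m.+2) p (y : Dmap p m) : avoids (dcomp (coface i) y) i.
Proof. by apply/forallP => j; rewrite dcompE ffunE eq_sym neq_lift. Qed.

Lemma avoids_coface_lift m (i : 'I_m.+2) p (y : Dmap p m) (t : 'I_m.+1) :
  avoids (dcomp (coface i) y) (lift i t) = avoids y t.
Proof. by apply: eq_forallb => j; rewrite dcompE ffunE (inj_eq (@lift_inj _ i)). Qed.

Lemma coface_retractK m (i : 'I_m.+2) p (x : Dmap p m.+1) :
  avoids x i -> dcomp (coface i) (dcomp (coface_retract i) x) = x.
Proof.
move=> /forallP x_avoids; apply: val_inj; apply/ffunP => j.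
rewrite !dcompE !ffunE.
case: (unliftP i (sval x j)) (x_avoids j) => [t ->|->]; last by rewrite eqxx.
by move=> _; apply: val_inj; rewrite /= bumpK inordK ?(minn_idPl (leq_ord t)).
Qed.

Definition Dsimp_map m n (g : Dmap m n) : smap (Dsimp m) (Dsimp n).
Proof.
by apply: (@SMap (Dsimp m) (Dsimp n) (fun p x => dcomp g x)) => p q f x; rewrite dcompA.
Defined.

Lemma Dsimp_mapE m n (g : Dmap m n) p (x : Dmap p m) : Dsimp_map g p x = dcomp g x.
Proof. by []. Qed.

Lemma chainP_coface m (i : 'I_m.+2) p (y : Dmap p m) :
  0 < m -> chainP (dcomp (coface i) y) -> chainP y.
Proof. by move=> m_gt0; rewrite !chainP_span // !dcompE !ffunE /= /bump; lia. Qed.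

(* The chain of the face ∂_i Δ[m+1] consists of edges of I_(m+1) and, for 0 < i < m+1, of the
   edge {i-1, i+1}; this condition puts that edge in a face ∂_t, t ∈ T. *)
Definition coface_skip_covered m (i : 'I_m.+2) (T : nat -> bool) : Prop :=
  [\/ i = 0 :> nat, i = m.+1 :> nat | exists2 t : 'I_m.+2, T t & (t.+2 <= i) || (i.+2 <= t)].

Lemma chainP_coface_covered m (i : 'I_m.+2) (T : nat -> bool) p (y : Dmap p m) :
  0 < m -> coface_skip_covered i T -> chainP y ->
  chainP (dcomp (coface i) y) || [exists t : 'I_m.+2, T t && avoids (dcomp (coface i) y) t].
Proof.
move=> m_gt0 cover; rewrite !chainP_span // !dcompE !ffunE /= => span.
case: leqP => //= skip.
have y_last := ltn_ord (sval y ord_max).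
have [y_first y_top] : (sval y ord0).+1 = i /\ sval y ord_max = i :> nat.
  by move: skip span; rewrite /bump; lia.
case: cover => [||[t Tt far]]; try lia.
apply/existsP; exists t; rewrite Tt; apply/forallP => j; rewrite dcompE ffunE.
by have := dmap_between y j; rewrite -(inj_eq val_inj) /= /bump; lia.
Qed.

Definition chainS n : ssub (Dsimp n) := SSub (chain_closed n).

Definition faceS n (i : 'I_n.+1) : ssub (Dsimp n).
Proof.
apply: (@SSub (Dsimp n) (fun p (x : Dmap p n) => avoids x i)).
by move=> p q f x /forallP x_avoids; apply/forallP => j; rewrite dcompE.
Defined.

Lemma in_faceS n (i : 'I_n.+1) p (x : Dmap p n) : faceS i p x = avoids x i.
Proof. by []. Qed.

Definition chain_faces n (T : nat -> bool) : ssub (Dsimp n).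
Proof.
apply: (@SSub (Dsimp n) (fun p (x : Dmap p n) =>
  chainP x || [exists t : 'I_n.+1, T t && avoids x t])).
move=> p q f x /orP [x_chain|/existsP [t /andP [Tt /forallP x_avoids]]]; apply/orP.
  by left; apply: chain_closed.
by right; apply/existsP; exists t; rewrite Tt; apply/forallP => j; rewrite dcompE.
Defined.

Lemma chain_le_faces n (T : nat -> bool) : sle (chainS n) (chain_faces n T).
Proof. by move=> p x /= ->. Qed.
Arguments chain_le_faces : clear implicits.

Lemma exists_avoids_coface m (i : 'I_m.+2) (T : nat -> bool) p (y : Dmap p m) : T i = false ->
  [exists t : 'I_m.+2, T t && avoids (dcomp (coface i) y) t] =
  [exists t : 'I_m.+1, T (bump i t) && avoids y t].
Proof.
move=> Ti; apply/existsP/existsP => [[t]|[t]].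
  by case: (unliftP i t) => [t' ->|->]; [rewrite avoids_coface_lift; exists t' | rewrite Ti].
by exists (lift i t); rewrite avoids_coface_lift.
Qed.

Lemma chain_faces_coface m (i : 'I_m.+2) (T : nat -> bool) p (y : Dmap p m) :
  0 < m -> T i = false -> coface_skip_covered i T ->
  chain_faces m.+1 T p (dcomp (coface i) y) = chain_faces m (fun t => T (bump i t)) p y.
Proof.
move=> m_gt0 Ti cover; rewrite /= exists_avoids_coface //.
apply/idP/idP => /orP [y_chain|->]; rewrite ?orbT //.
  by rewrite (chainP_coface m_gt0 y_chain).
by move: (chainP_coface_covered m_gt0 cover y_chain); rewrite exists_avoids_coface // => ->.
Qed.

Lemma chain_faces_add n (T : nat -> bool) (i : 'I_n.+1) p (x : Dmap p n) :
  ssubU (chain_faces n T) (faceS i) p x = chain_faces n (fun t => T t || (t == i)) p x.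
Proof.
rewrite /= -orbA; congr orb; apply/idP/idP.
  case/orP => [/existsP [t /andP [Tt t_avoided]]|i_avoided]; apply/existsP.
    by exists t; rewrite Tt.
  by exists i; rewrite eqxx orbT.
case/existsP => t /andP [/orP [Tt|/eqP ti] t_avoided]; last by rewrite -(val_inj ti) t_avoided orbT.
by apply/orP; left; apply/existsP; exists t; rewrite Tt.
Qed.

Definition outside (a b t : nat) : bool := (t < a) || (b < t).

Lemma chain_faces_horn n (k : 'I_n.+1) p (x : Dmap p n) : 0 < k < n ->
  chain_faces n (outside k k) p x = hornP k x.
Proof.
move=> /andP [k_gt0 k_lt_n]; rewrite /= /outside.
have -> : [exists t : 'I_n.+1, ((t < k) || (k < t)) && avoids x t] = hornP k x.
  by apply: eq_existsb => t; rewrite -neq_ltn.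
apply/orP/idP => [[x_chain|//]|->]; last by right.
move: x_chain; rewrite chainP_span ?(ltn_trans k_gt0) // => span.
apply/existsP; case: (posnP (sval x ord0)) => x0.
  exists ord_max; apply/andP; split; first by rewrite -(inj_eq val_inj) /= neq_ltn k_lt_n orbT.
  by apply/forallP => j; have := dmap_between x j; rewrite -(inj_eq val_inj) /=; lia.
exists ord0; apply/andP; split; first by rewrite -(inj_eq val_inj) /= neq_ltn k_gt0.
by apply/forallP => j; have := dmap_between x j; rewrite -(inj_eq val_inj) /=; lia.
Qed.

Definition chain_faces_in (A : sclass) n (T : nat -> bool) : Prop :=
  A _ _ (sub_incl (chain_le_faces n T)).

Section ChainFaces.
Variable A : sclass.
Hypotheses (A_sat : saturated A) (A_cancel : right_cancel A).
Hypothesis A_chain : forall n, 2 <= n -> A (chain_incl n).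

Lemma A_chain_sleT m : 0 < m -> A (sub_incl (sleT (chainS m))).
Proof.
case: m => [|[|m]] // _; first by apply: (A_sub_incl_eq A_sat) => p x _; apply: chainP_Dsimp1.
by apply/(A_sincl_sleT A_sat)/A_chain.
Qed.

Lemma chain_faces_in_ext n (T T' : nat -> bool) : (forall t, t < n.+1 -> T t = T' t) ->
  chain_faces_in A n T -> chain_faces_in A n T'.
Proof.
move=> eT; apply: (A_sub_incl_ext A_sat) => // p x /=; congr orb.
by apply: eq_existsb => t; rewrite eT.
Qed.

Lemma chain_faces_in_none n : chain_faces_in A n (fun _ => false).
Proof. by apply: (A_sub_incl_eq A_sat) => p x /= /orP [|/existsP []]. Qed.

Lemma chain_faces_in_Dsimp1 (T : nat -> bool) : chain_faces_in A 1 T.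
Proof. by apply: (A_sub_incl_eq A_sat) => p x _; apply: chainP_Dsimp1. Qed.

Lemma chain_faces_in_add m (i : 'I_m.+2) (T : nat -> bool) :
  T i = false -> coface_skip_covered i T ->
  chain_faces_in A m (fun t => T (bump i t)) -> chain_faces_in A m.+1 T ->
  chain_faces_in A m.+1 (fun t => T t || (t == i)).
Proof.
case: m i => [|m] i Ti cover A_T' A_T; first exact: chain_faces_in_Dsimp1.
have A_face := A_sub_incl_cancel A_sat A_cancel (sleT _) (A_chain_sleT (ltn0Sn m)) A_T'.
have A_meet : A (sub_incl (sleIr (chain_faces m.+2 T) (faceS i))).
  apply: (A_retract A_sat) A_face.
  apply: (@sub_incl_retract _ _ _ _ _ _ _ _ (Dsimp_map (coface i)) (Dsimp_map (coface_retract i)))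
    => p x; rewrite ?in_ssubI ?in_faceS ?Dsimp_mapE //.
  - by rewrite chain_faces_coface // avoids_coface andbT.
  - by rewrite avoids_coface.
  - by case/andP => x_T x_avoids; rewrite -chain_faces_coface // coface_retractK.
  - exact: coface_retractK.
have le_add : sle (chain_faces m.+2 T) (chain_faces m.+2 (fun t => T t || (t == i))).
  by move=> p x /(sleUl _ (faceS i)); rewrite chain_faces_add.
apply: (A_sub_incl_comp A_sat _ A_T (A_sub_incl_ext A_sat le_add _ _ (A_ssubU A_sat A_meet))) => //.
by move=> p x; rewrite chain_faces_add.
Qed.

Lemma chain_faces_in_add_ext m (i : 'I_m.+2) (T T' U : nat -> bool) :
  T i = false -> coface_skip_covered i T ->
  (forall t, t < m.+1 -> T (bump i t) = T' t) -> (forall t, t < m.+2 -> T t || (t == i) = U t) ->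
  chain_faces_in A m T' -> chain_faces_in A m.+1 T -> chain_faces_in A m.+1 U.
Proof.
move=> Ti cover eT' eU A_T' A_T; apply: chain_faces_in_ext eU _.
exact: chain_faces_in_add Ti cover (chain_faces_in_ext (fun t lt_t => esym (eT' t lt_t)) A_T') A_T.
Qed.

Lemma chain_faces_in_first n : chain_faces_in A n.+1 (fun t => t == 0).
Proof.
apply: (chain_faces_in_add_ext (i := ord0) (T := fun _ => false) (T' := fun _ => false)) => //.
- exact: Or31.
- exact: chain_faces_in_none.
- exact: chain_faces_in_none.
Qed.

Lemma chain_faces_in_outside n a b : 0 < a -> a <= b < n -> chain_faces_in A n (outside a b).
Proof.
elim: n a b => [|n IHn] a b; first lia.
have last_gap a' : 0 < a' <= n -> chain_faces_in A n.+1 (outside a' n).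
  elim: a' => [//|a' IHa a_le].
  case: a' IHa a_le => [_ a_le|a' IHa a_le].
    case: n IHn a_le => [|n] _ // _.
    apply: (chain_faces_in_add_ext (i := ord_max) (T := fun t => t == 0)
      (T' := fun t => t == 0)) (chain_faces_in_first _) (chain_faces_in_first _) => //.
    - exact: Or32.
    - by move=> t t_lt; rewrite /bump /=; lia.
    - by move=> t t_lt; rewrite /outside /=; lia.
  have i_lt : a'.+1 < n.+2 by lia.
  apply: (chain_faces_in_add_ext (i := Ordinal i_lt) (T := outside a'.+1 n)
    (T' := outside a'.+1 n.-1)) (IHn _ _ _ _) (IHa _); rewrite /outside /bump /=; try lia.
  by apply: Or33; exists ord_max; rewrite /outside /=; lia.
move=> a_gt0 /andP [a_le_b b_lt].
have shrink b' : a <= b' < n ->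
    chain_faces_in A n.+1 (outside a b'.+1) -> chain_faces_in A n.+1 (outside a b').
  move=> b'_bounds; have i_lt : b'.+1 < n.+2 by lia.
  apply: (chain_faces_in_add_ext (i := Ordinal i_lt) (T := outside a b'.+1)
    (T' := outside a b')) (IHn _ _ _ _); rewrite /outside /bump /=; try lia.
  by apply: Or33; exists ord0; rewrite /outside /=; lia.
have descend d : d <= n - b -> chain_faces_in A n.+1 (outside a (n - d)).
  elim: d => [_|d IHd d_le]; first by rewrite subn0; apply: last_gap; lia.
  have e : n - d = (n - d.+1).+1 by lia.
  by apply: shrink; [lia | rewrite -e; apply: IHd; lia].
by have := descend (n - b) (leqnn _); rewrite subKn // -ltnS.
Qed.
End ChainFaces.

Theorem lemma3p5 (A : sclass) :
  (forall X Y (f : smap X Y), A X Y f -> mono f) ->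
  saturated A ->
  right_cancel A ->
  (forall n, 2 <= n -> A _ _ (chain_incl n)) ->
  forall X Y (f : smap X Y), mid_anodyne f -> A X Y f.
Proof.
move=> _ A_sat A_cancel A_chain X Y f f_mid; apply: f_mid => // n k /andP [k_gt0 k_lt_n].
pose hornS := SSub (horn_closed n k).
have horn_eq p x : chain_faces n (outside k k) p x = hornS p x.
  by rewrite chain_faces_horn ?k_gt0.
have chain_le_horn : sle (chainS n) hornS.
  by move=> p x x_chain; rewrite -horn_eq; apply: chain_le_faces.
apply/(A_sincl_sleT A_sat hornS).
apply: (A_sub_incl_cancel A_sat A_cancel (H12 := chain_le_horn) _ (A_chain_sleT A_sat A_chain _)).
  exact: leq_ltn_trans k_lt_n.
apply: (A_sub_incl_ext A_sat chain_le_horn _ horn_eq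
  (chain_faces_in_outside A_sat A_cancel A_chain k_gt0 _)) => //.
by rewrite leqnn.
Qed.
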